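(* Let $Z$ be a non-negative random variable satisfying $\mathbb{E}[Z^2]=1$. Then \[ \mathbb{E}\left[Z^2\,\frac{[Z-1/2]_+^2}{(Z+1/2)^2}\right]\ge \frac{1}{53}. \]
   Context: For $x\in\mathbb{R}$, $[x]_+=\max\{0,x\}$. *)

From mathcomp Require Import all_boot all_order all_algebra.
From mathcomp Require Import all_classical all_reals all_analysis.
Set Implicit Arguments. Unset Strict Implicit. Unset Printing Implicit Defensive.
Import Order.TTheory GRing.Theory Num.Theory.
Local Open Scope ring_scope.

Definition pos_part {R : realType} (x : R) : R := Num.max 0 x.

From mathcomp Require Import all_boot all_order all_algebra.
From mathcomp Require Import all_classical all_reals all_analysis.
From mathcomp Require Import measurable_realfun lra.
Import Order.TTheory GRing.Theory Num.Theory.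
Import numFieldNormedType.Exports.
Local Open Scope ring_scope.

(** For [z >= 0] one has the pointwise bound
    [z^2/4 <= z^2 [z - 1/2]_+^2 / (z + 1/2)^2 + 1/5];
    taking expectations with [E[Z^2] = 1] gives a lower bound
    [1/4 - 1/5 = 1/20 >= 1/53]. *)

Section expectation_affine_bound.
Context {d} {T : measurableType d} {R : realType} (P : probability T R).
Local Open Scope ereal_scope.

Lemma expectation_le_affine (X Y : T -> R) (a c : R) :
    measurable_fun setT X -> measurable_fun setT Y ->
    (forall w, 0 <= X w)%R -> (forall w, 0 <= Y w)%R ->
    (0 <= a)%R -> (0 <= c)%R ->
    (forall w, a * X w <= Y w + c)%R ->
  a%:E * 'E_P[X] <= 'E_P[Y] + c%:E.
Proof.
move=> mX mY X0 Y0 a0 c0 XY.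
have <- : 'E_P[fun w => a * X w]%R = a%:E * 'E_P[X].
  rewrite unlock; under eq_integral => w _ do rewrite EFinM.
  apply: ge0_integralZl_EFin => //; first by move=> w _; rewrite lee_fin.
  exact/measurable_EFinP.
have <- : 'E_P[Y \+ cst c] = 'E_P[Y] + c%:E.
  rewrite -(expectation_cst P c) unlock; under eq_integral => w _ do rewrite EFinD.
  rewrite ge0_integralD //.
  - by move=> w _; rewrite lee_fin.
  - exact/measurable_EFinP.
  - exact/measurable_EFinP/measurable_cst.
apply: expectation_le.
- by apply: measurable_funM => //; exact: measurable_cst.
- by apply: measurable_funD => //; exact: measurable_cst.
- by move=> w; rewrite /= mulr_ge0.
- by move=> w; rewrite /= addr_ge0.
- by apply: aeW => w; exact: XY.
Qed.

End expectation_affine_bound.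

Section shrink_weight.
Context {R : realType}.

Definition shrink_weight (z : R) : R :=
  z ^+ 2 * pos_part (z - 1 / 2) ^+ 2 / (z + 1 / 2) ^+ 2.

Lemma shrink_weight_ge0 z : 0 <= shrink_weight z.
Proof. by apply: divr_ge0; [apply: mulr_ge0 |]; exact: sqr_ge0. Qed.

(* For [z <= 1/2] the weight vanishes, and beyond it [z + 1/2 = [z - 1/2]_+ + 1];
   this form has a denominator bounded away from [0], hence is continuous. *)
Lemma shrink_weightE z :
  shrink_weight z =
    z ^+ 2 * pos_part (z - 1 / 2) ^+ 2 / (pos_part (z - 1 / 2) + 1) ^+ 2.
Proof.
rewrite /shrink_weight /pos_part; case: (leP z (1 / 2)) => hz.
  by rewrite (max_idPl _) ?subr_le0 // expr0n /= mulr0 !mul0r.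
by rewrite (max_idPr _) ?subr_ge0 ?ltW //; congr (_ / _ ^+ 2); lra.
Qed.

Lemma continuous_shrink_weight : continuous shrink_weight.
Proof.
pose p z : R := pos_part (z - 1 / 2).
have cp : continuous p.
  move=> z; apply: (@continuous_max R R (cst 0) (fun z => z - 1 / 2)).
    exact: cst_continuous.
  by apply: continuousD; [exact: cvg_id | exact: cst_continuous].
have cp2 : continuous (fun z => p z ^+ 2).
  move=> z; apply: (@continuous_comp _ _ _ p (fun y => y ^+ 2)); first exact: cp.
  exact: exprn_continuous.
have -> : shrink_weight =
    (fun z => z ^+ 2 * p z ^+ 2) \* (fun z => ((p z + 1) ^+ 2)^-1).
  by apply/funext => z; rewrite shrink_weightE.
move=> z; apply: continuousM.
  by apply: continuousM; [exact: exprn_continuous | exact: cp2].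
apply: continuousV.
  by rewrite expf_neq0 // gt_eqF // ltr_wpDl // /p /pos_part le_max lexx.
apply: (@continuous_comp _ _ _ (fun z => p z + 1) (fun y => y ^+ 2)).
  by apply: continuousD; [exact: cp | exact: cst_continuous].
exact: exprn_continuous.
Qed.

Lemma quarter_sqr_le_shrink_weight z : 0 <= z ->
  1 / 4 * z ^+ 2 <= shrink_weight z + 1 / 5.
Proof.
move=> z0; rewrite mulrC mul1r /shrink_weight /pos_part.
case: (leP z (1 / 2)) => hz.
  have -> : Num.max 0 (z - 1 / 2) = 0 by apply/max_idPl; lra.
  rewrite expr0n /= mulr0 mul0r add0r; nra.
have -> : Num.max 0 (z - 1 / 2) = z - 1 / 2 by apply/max_idPr; lra.
rewrite -lerBlDr ler_pdivlMr; last by apply: exprn_gt0; lra.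
set t := z - 1 / 2; have -> : z = t + 1 / 2 by rewrite /t; lra.
have t0 : 0 <= t by rewrite /t; lra.
(* The only nonlinear certificate needed: [(t^2 - 2/5)^2 >= 0]. *)
have h1 : 0 <= (t ^+ 2 - 2 / 5) ^+ 2 by exact: sqr_ge0.
have h2 : 0 <= t ^+ 2 by exact: sqr_ge0.
have h3 : 0 <= t ^+ 3 by exact: exprn_ge0.
rewrite !exprS !expr0 in h1 h2 h3 *; nra.
Qed.

End shrink_weight.

Local Open Scope ereal_scope.

Theorem lemma2 (d : measure_display) (T : measurableType d) (R : realType)
  (P : probability T R) (Z : {RV P >-> R})
  (hZ0 : forall w, (0 <= Z w)%R)
  (hZ2 : 'E_P[fun w => (Z w ^+ 2)%R] = 1%E) :
  ((1 / 53)%R)%:E <=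
  'E_P[fun w => (Z w ^+ 2 * pos_part (Z w - 1 / 2) ^+ 2 / (Z w + 1 / 2) ^+ 2)%R].
Proof.
have mZ2 : measurable_fun setT (fun w => Z w ^+ 2)%R by exact: measurable_funX.
have mW : measurable_fun setT (shrink_weight \o Z).
  exact: measurableT_comp (continuous_measurable_fun continuous_shrink_weight) _.
have := expectation_le_affine P _ _ (1 / 4) (1 / 5) mZ2 mW
  (fun w => sqr_ge0 (Z w)) (fun w => shrink_weight_ge0 (Z w)) ltac:(lra) ltac:(lra)
  (fun w => quarter_sqr_le_shrink_weight (Z w) (hZ0 w)).
rewrite hZ2 mule1 -leeBlDr // -EFinB; apply: le_trans.
by rewrite lee_fin; lra.
Qed.
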